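(* Let $n\in\mathbb N$ and consider the class of non-empty subsets of $\mathbb R^n$ with out-radius at most $1$. On this class, the map $K\mapsto K^c$ is continuous with respect to the Hausdorff metric.
   Context: $B(x,r)$ is the closed Euclidean ball and $B=B(0,1)$. For $A\subseteq\mathbb R^n$, $A^c=\bigcap_{x\in A}B(x,1)$. The out-radius of $A$ is the infimum of $R\ge0$ such that $A\subseteq B(z,R)$ for some $z$. The Hausdorff distance is $d_H(K,L)=\inf\{\lambda\ge0:K\subseteq L+\lambda B,\ L\subseteq K+\lambda B\}$. *)

From HB Require Import structures.
From mathcomp Require Import all_boot all_order all_algebra.
From mathcomp Require Import all_classical all_reals ereal.
Set Implicit Arguments. Unset Strict Implicit. Unset Printing Implicit Defensive.
Import Order.TTheory GRing.Theory Num.Theory.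
Local Open Scope classical_set_scope.
Local Open Scope ring_scope.

Section Defs.
Variables (R : realType) (n : nat).
Notation V := 'rV[R]_n.

Definition enorm (x : V) : R := Num.sqrt (\sum_(i < n) (x 0 i) ^+ 2).

Definition cball (x : V) (r : R) : set V := [set y | enorm (y - x) <= r].

Definition unitB : set V := cball 0 1.

(* A^c = intersection of B(x,1) over x in A. *)
Definition bdual (A : set V) : set V := [set y | forall x, A x -> cball x 1 y].

Definition msum (A B : set V) : set V := [set a + b | a in A & b in B].
Definition sscale (l : R) (A : set V) : set V := [set l *: a | a in A].

(* Out-radius: inf of R >= 0 such that A is contained in some B(z,R)
   (extended-real valued; +oo if no such R). *)
Definition outradius (A : set V) : \bar R :=
  ereal_inf [set r%:E | r in [set r : R | 0 <= r /\ exists z, A `<=` cball z r]].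

Definition hausdorff (K L : set V) : \bar R :=
  ereal_inf [set l%:E | l in [set l : R | 0 <= l /\
     K `<=` msum L (sscale l unitB) /\ L `<=` msum K (sscale l unitB)]].

Definition admissible (A : set V) : Prop :=
  A !=set0 /\ (outradius A <= 1%:E)%E.
End Defs.

From HB Require Import structures.
From mathcomp Require Import all_boot all_order all_algebra.
From mathcomp Require Import all_classical all_reals ereal.
From mathcomp Require Import ring lra.
Set Implicit Arguments. Unset Strict Implicit. Unset Printing Implicit Defensive.
Import Order.TTheory GRing.Theory Num.Theory.
Local Open Scope classical_set_scope.
Local Open Scope ring_scope.

(* If L is contained in K + lB, every point y of K^c lies within 1 + l of every point of L.
   Given a point z of L^c, moving y towards z by the fraction s = (2l + l^2) / |y - z|^2 lands
   in L^c, by the identity |s a + (1 - s) b|^2 = s|a|^2 + (1 - s)|b|^2 - s(1 - s)|a - b|^2,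
   and moves y by at most sqrt(2l + l^2). Hence d_H(K^c, L^c) <= sqrt(2l + l^2) whenever
   d_H(K, L) < l, provided L^c is non-empty. This is where the out-radius bound enters: a set
   of out-radius at most 1 lies in a ball of radius 1, because by the parallelogram law nearly
   optimal enclosing balls have nearby centers, which therefore converge to a Chebyshev center. *)

Section RealCompleteness.
Variable R : realType.

Lemma real_cauchy_limit (u g : nat -> R) : (forall k, 0 <= g k) ->
  (forall j k, (k <= j)%N -> `|u j - u k| <= g k) ->
  exists c, forall k, `|u k - c| <= g k.
Proof.
move=> g0 uC; pose E := [set u m - g m | m in [set: nat]].
have E_ub k : ubound E (u k + g k).
  move=> _ [m _ <-]; have := g0 k; have := g0 m.
  have [km|mk] := leqP k m.
    by have := uC m k km; rewrite ler_norml; lra.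
  by have := uC k m (ltnW mk); rewrite ler_norml; lra.
have E0 : E !=set0 by exists (u 0%N - g 0%N), 0%N.
exists (sup E) => k; rewrite distrC ler_distl; apply/andP; split.
  by apply: sup_upper_bound; [split; last exists (u 0%N + g 0%N) | exists k].
exact: ge_sup.
Qed.

Lemma le_of_le_addr_invS (a b M : R) : 0 <= M ->
  (forall k : nat, a <= b + M * k.+1%:R^-1) -> a <= b.
Proof.
move=> M0 abM; apply/ler_addgt0Pr => e e0.
have /archi_boundP := divr_ge0 M0 (ltW e0); set k := Num.Def.archi_bound _ => Mk.
apply: le_trans (abM k) _; rewrite lerD2l ler_pdivrMr //.
rewrite ltr_pdivrMr // in Mk; apply: le_trans (ltW Mk) _.
by rewrite mulrC ler_wpM2l ?ler_nat ?ltW.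
Qed.

End RealCompleteness.

Section EuclideanNorm.
Variables (R : realType) (n : nat).
Notation V := 'rV[R]_n.
Implicit Types (u v x y z : V) (A B : set V).

Definition sqnorm v : R := \sum_(i < n) v 0 i ^+ 2.
Definition dotp u v : R := \sum_(i < n) u 0 i * v 0 i.

Lemma sqnorm_ge0 v : 0 <= sqnorm v.
Proof. by apply: sumr_ge0 => i _; rewrite sqr_ge0. Qed.

Lemma enorm_ge0 v : 0 <= enorm v.
Proof. exact: sqrtr_ge0. Qed.

Lemma sqr_enorm v : enorm v ^+ 2 = sqnorm v.
Proof. by rewrite /enorm sqr_sqrtr // sqnorm_ge0. Qed.

Lemma enorm_leP v r : 0 <= r -> enorm v <= r <-> sqnorm v <= r ^+ 2.
Proof. by move=> r0; rewrite -sqr_enorm ler_sqr ?nnegrE ?enorm_ge0. Qed.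

Lemma enorm_eq0 v : enorm v = 0 -> v = 0.
Proof.
move/eqP; rewrite sqrtr_eq0 => le0; apply/rowP => i; rewrite mxE.
have /eqP sq0 : sqnorm v == 0 by rewrite eq_le le0 sqnorm_ge0.
have /(_ i isT) := @psumr_eq0P R _ xpredT _ (fun j _ => sqr_ge0 (v 0 j)) sq0.
by move/eqP; rewrite sqrf_eq0 => /eqP.
Qed.

Lemma sqnorm_lincomb s t u v :
  sqnorm (s *: u + t *: v) = s ^+ 2 * sqnorm u + 2 * (s * t) * dotp u v + t ^+ 2 * sqnorm v.
Proof.
rewrite /sqnorm /dotp !mulr_sumr -!big_split /=; apply: eq_bigr => i _.
by rewrite !mxE; ring.
Qed.

Lemma sqnorm_convex s t u v : s + t = 1 ->
  sqnorm (s *: u + t *: v) = s * sqnorm u + t * sqnorm v - s * t * sqnorm (u - v).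
Proof.
move=> st; have -> : s = 1 - t by rewrite -st addrK.
rewrite /sqnorm !mulr_sumr -big_split -sumrB /=; apply: eq_bigr => i _.
by rewrite !mxE; ring.
Qed.

Lemma enormZ c v : enorm (c *: v) = `|c| * enorm v.
Proof.
rewrite /enorm -sqrtr_sqr -sqrtrM ?sqr_ge0 // mulr_sumr.
by congr Num.sqrt; apply: eq_bigr => i _; rewrite mxE exprMn.
Qed.

Lemma sqnormZ c v : sqnorm (c *: v) = c ^+ 2 * sqnorm v.
Proof. by rewrite -!sqr_enorm enormZ exprMn real_normK ?num_real. Qed.

Lemma enormN v : enorm (- v) = enorm v.
Proof. by rewrite -scaleN1r enormZ normrN1 mul1r. Qed.

Lemma enorm_distC u v : enorm (u - v) = enorm (v - u).
Proof. by rewrite -enormN opprB. Qed.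

Lemma sqnorm_distC u v : sqnorm (u - v) = sqnorm (v - u).
Proof. by rewrite -!sqr_enorm enorm_distC. Qed.

Lemma dotp_le_enorm u v : dotp u v <= enorm u * enorm v.
Proof.
have [/enorm_eq0 ->|nu0] := eqVneq (enorm u) 0.
  by rewrite /dotp big1 ?mulr_ge0 ?enorm_ge0 // => i _; rewrite mxE mul0r.
have [/enorm_eq0 ->|nv0] := eqVneq (enorm v) 0.
  by rewrite /dotp big1 ?mulr_ge0 ?enorm_ge0 // => i _; rewrite mxE mulr0.
have uv0 : 0 < enorm u * enorm v by rewrite mulr_gt0 // lt_def ?nu0 ?nv0 enorm_ge0.
have := sqnorm_ge0 (enorm v *: u + (- enorm u) *: v).
rewrite sqnorm_lincomb sqrrN -!sqr_enorm; nra.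
Qed.

Lemma enormD u v : enorm (u + v) <= enorm u + enorm v.
Proof.
apply/enorm_leP; first by rewrite addr_ge0 ?enorm_ge0.
rewrite -[u]scale1r -[v]scale1r sqnorm_lincomb !scale1r -!sqr_enorm.
have := dotp_le_enorm u v; nra.
Qed.

Lemma coord_le_enorm v i : `|v 0 i| <= enorm v.
Proof.
rewrite /enorm -sqrtr_sqr ler_sqrt ?sqnorm_ge0 // /sqnorm (bigD1 i) //= lerDl.
by apply: sumr_ge0 => j _; exact: sqr_ge0.
Qed.

Lemma enorm_le_coord v M : 0 <= M -> (forall i, `|v 0 i| <= M) ->
  enorm v <= Num.sqrt n%:R * M.
Proof.
move=> M0 vM; rewrite /enorm -(ger0_norm M0) -sqrtr_sqr -sqrtrM ?ler0n // ler_sqrt.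
  apply: (@le_trans _ _ (\sum_(i < n) M ^+ 2)); last by rewrite sumr_const card_ord mulr_natl.
  apply: ler_sum => i _.
  by rewrite -real_normK ?num_real // lerXn2r ?nnegrE ?normr_ge0 ?vM.
by rewrite mulr_ge0 ?sqr_ge0.
Qed.

Lemma rV_cauchy_limit (z : nat -> V) (g : nat -> R) : (forall k, 0 <= g k) ->
  (forall j k, (k <= j)%N -> enorm (z j - z k) <= g k) ->
  exists c, forall k, enorm (z k - c) <= Num.sqrt n%:R * g k.
Proof.
move=> g0 zC.
have coordC i : exists c, forall k, `|z k 0 i - c| <= g k.
  apply: real_cauchy_limit => // j k kj.
  by apply: le_trans (zC j k kj); have := coord_le_enorm (z j - z k) i; rewrite !mxE.
have [c cP] := choice coordC.
by exists (\row_i c i) => k; apply: enorm_le_coord => // i; rewrite !mxE; exact: cP.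
Qed.

End EuclideanNorm.

Section ChebyshevCenter.
Variables (R : realType) (n : nat).
Notation V := 'rV[R]_n.
Implicit Types (x y z : V) (A : set V).

Definition enclosing_radii A : set R := [set r | 0 <= r /\ exists z, A `<=` cball z r].

Lemma outradius_radii A : enclosing_radii A !=set0 ->
  outradius A = (inf (enclosing_radii A))%:E.
Proof. by move=> ne; apply: ereal_inf_EFin => //; exists 0 => r []. Qed.

Lemma enclosing_radii_inf_ge0 A : enclosing_radii A !=set0 -> 0 <= inf (enclosing_radii A).
Proof. by move=> ne; apply: lb_le_inf => // r []. Qed.

Lemma cball_midpoint A z1 z2 (r1 r2 : R) : 0 <= r1 -> 0 <= r2 ->
  A `<=` cball z1 r1 -> A `<=` cball z2 r2 -> forall x, A x ->
  sqnorm (x - 2^-1 *: (z1 + z2)) <= (r1 ^+ 2 + r2 ^+ 2) / 2 - sqnorm (z1 - z2) / 4.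
Proof.
move=> r10 r20 A1 A2 x Ax.
have -> : x - 2^-1 *: (z1 + z2) = 2^-1 *: (x - z1) + 2^-1 *: (x - z2).
  by apply/rowP => i; rewrite !mxE; field.
rewrite sqnorm_convex; last by field.
have -> : x - z1 - (x - z2) = z2 - z1 by rewrite opprB addrC addrA subrK.
rewrite [sqnorm (z2 - z1)]sqnorm_distC.
have /enorm_leP h1 := A1 x Ax; have /enorm_leP h2 := A2 x Ax.
have := h1 r10; have := h2 r20; lra.
Qed.

Lemma enclosing_centers_close A z1 z2 (r1 r2 : R) : A !=set0 -> 0 <= r1 -> 0 <= r2 ->
  A `<=` cball z1 r1 -> A `<=` cball z2 r2 ->
  sqnorm (z1 - z2) <= 2 * (r1 ^+ 2 + r2 ^+ 2) - 4 * inf (enclosing_radii A) ^+ 2.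
Proof.
move=> [x Ax] r10 r20 A1 A2; have Am := cball_midpoint r10 r20 A1 A2.
set T := (_ / 2 - _ / 4) in Am.
have T0 : 0 <= T := le_trans (sqnorm_ge0 _) (Am x Ax).
have radT : enclosing_radii A (Num.sqrt T).
  split; first exact: sqrtr_ge0.
  exists (2^-1 *: (z1 + z2)) => y Ay; apply/enorm_leP; first exact: sqrtr_ge0.
  by rewrite sqr_sqrtr //; exact: Am.
have : inf (enclosing_radii A) ^+ 2 <= T.
  rewrite -(sqr_sqrtr T0) ler_sqr ?nnegrE ?sqrtr_ge0 ?enclosing_radii_inf_ge0 //.
    by apply: ge_inf => //; exists 0 => r [].
  by exists (Num.sqrt T).
rewrite /T; lra.
Qed.

Lemma exists_chebyshev_center A : A !=set0 -> enclosing_radii A !=set0 ->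
  exists z, A `<=` cball z (inf (enclosing_radii A)).
Proof.
move=> A0 rad0; set rho := inf _; have rho0 : 0 <= rho := enclosing_radii_inf_ge0 rad0.
pose d k : R := k.+1%:R^-1.
have d0 k : 0 < d k by rewrite invr_gt0.
have d1 k : d k <= 1 by rewrite invr_le1 ?unitfE ?ler1n.
have d_mono j k : (k <= j)%N -> d j <= d k by move=> kj; rewrite lef_pV2 ?posrE ?ler_nat.
have approx k : exists z, A `<=` cball z (rho + d k ^+ 2).
  have : rho < rho + d k ^+ 2 by rewrite ltrDl exprn_gt0.
  case/(inf_lt rad0) => r [_ [z Az]] rlt.
  by exists z => x /Az /le_trans; apply; exact: ltW.
have [z zP] := choice approx.
have zC j k : (k <= j)%N -> enorm (z j - z k) <= (2 * rho + 2) * d k.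
  move=> kj; have dk0 := ltW (d0 k); apply/enorm_leP; first by rewrite mulr_ge0 // addr_ge0 ?mulr_ge0.
  apply: le_trans (enclosing_centers_close A0 _ _ (zP j) (zP k)) _.
  - by rewrite addr_ge0 ?sqr_ge0.
  - by rewrite addr_ge0 ?sqr_ge0.
  have djk := d_mono j k kj; have dj0 := ltW (d0 j); have dk1 := d1 k.
  have dj2 : d j ^+ 2 <= d k ^+ 2 by rewrite ler_sqr ?nnegrE.
  have dk4 : d k ^+ 2 * d k ^+ 2 <= d k ^+ 2 by rewrite ler_piMl ?sqr_ge0 // expr_le1.
  have dj4 : d j ^+ 2 * d j ^+ 2 <= d k ^+ 2.
    by apply: le_trans dk4; rewrite ler_pM ?sqr_ge0.
  nra.
have g0 k : 0 <= (2 * rho + 2) * d k by rewrite mulr_ge0 ?(ltW (d0 k)) // addr_ge0 ?mulr_ge0.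
have [c cP] := rV_cauchy_limit g0 zC.
exists c => x Ax; rewrite /cball /=.
apply: (le_of_le_addr_invS (M := 1 + Num.sqrt n%:R * (2 * rho + 2))) => [|k].
  by rewrite addr_ge0 ?mulr_ge0 ?sqrtr_ge0 ?addr_ge0 ?mulr_ge0.
have -> : x - c = (x - z k) + (z k - c) by rewrite addrA subrK.
apply: le_trans (enormD _ _) _.
have zx : enorm (x - z k) <= rho + d k ^+ 2 := zP k x Ax.
have dk2 : d k ^+ 2 <= d k by rewrite expr2 ler_piMl ?(ltW (d0 k)).
have /= := cP k; rewrite -/(d k); lra.
Qed.

Lemma admissible_bdual_neq0 A : admissible A -> bdual A !=set0.
Proof.
case=> A0 out1.
have rad0 : enclosing_radii A !=set0.
  have : (outradius A < 2%:E)%E by apply: le_lt_trans out1 _; rewrite lte_fin ltr1n.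
  by case/ereal_inf_lt => _ [r Ar <-] _; exists r.
have [z Az] := exists_chebyshev_center A0 rad0.
exists z => x /Az; rewrite /cball /= enorm_distC => /le_trans; apply.
by move: out1; rewrite outradius_radii // lee_fin.
Qed.

End ChebyshevCenter.

Section DualBalls.
Variables (R : realType) (n : nat).
Notation V := 'rV[R]_n.
Implicit Types (v x y z : V) (A B : set V).

Lemma sscale_unitB_enorm l v : 0 <= l -> sscale l (@unitB R n) v -> enorm v <= l.
Proof.
move=> l0 [b]; rewrite /unitB /cball /= subr0 => b1 <-.
by rewrite enormZ ger0_norm // ler_piMr.
Qed.

Lemma enorm_sscale_unitB l v : 0 < l -> enorm v <= l -> sscale l (@unitB R n) v.
Proof.
move=> l0 vl; exists (l^-1 *: v); last by rewrite scalerA divff ?gt_eqF ?scale1r.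
rewrite /unitB /cball /= subr0 enormZ ger0_norm; last by rewrite invr_ge0 ltW.
by rewrite ler_pdivrMl // mulr1.
Qed.

Lemma exists_bdual_near B y z l : 0 <= l ->
  (forall x, B x -> enorm (y - x) <= 1 + l) -> bdual B z ->
  exists2 p, bdual B p & sqnorm (y - p) <= 2 * l + l ^+ 2.
Proof.
move=> l0 yB Bz; set q := 2 * l + l ^+ 2; set D := sqnorm (y - z).
have [Dq|qD] := leP D q; first by exists z.
have q0 : 0 <= q by rewrite addr_ge0 ?mulr_ge0 ?sqr_ge0.
have D0 : 0 < D by apply: le_lt_trans qD.
pose s := q / D.
have sD : s * D = q by rewrite mulfVK ?gt_eqF.
have s0 : 0 <= s by rewrite divr_ge0 // ltW.
have s1 : s <= 1 by rewrite ler_pdivrMr // mul1r ltW.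
exists (s *: z + (1 - s) *: y).
  move=> x Bx; apply/enorm_leP; rewrite ?expr1n //.
  have -> : s *: z + (1 - s) *: y - x = s *: (z - x) + (1 - s) *: (y - x).
    by apply/rowP => i; rewrite !mxE; ring.
  rewrite sqnorm_convex ?subrKC // opprB addrA subrK [sqnorm (z - y)]sqnorm_distC -/D.
  have /enorm_leP zx := Bz x Bx; have /enorm_leP yx := yB x Bx.
  have h1 : s * sqnorm (z - x) <= s by rewrite ler_piMr // -(expr1n R 2) zx.
  have h2 : (1 - s) * sqnorm (y - x) <= (1 - s) * (1 + l) ^+ 2.
    by rewrite ler_wpM2l ?subr_ge0 // yx // addr_ge0.
  have : s * (1 - s) * D = (1 - s) * q by rewrite -sD; ring.
  have : (1 - s) * (1 + l) ^+ 2 = (1 - s) + (1 - s) * q by rewrite /q; ring.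
  lra.
have -> : y - (s *: z + (1 - s) *: y) = s *: (y - z).
  by apply/rowP => i; rewrite !mxE; ring.
by rewrite sqnormZ -/D expr2 -mulrA sD ler_piMl.
Qed.

Lemma bdual_sub_inflate A B (l eta : R) : 0 <= l -> 0 < eta -> 2 * l + l ^+ 2 <= eta ^+ 2 ->
  B `<=` msum A (sscale l (@unitB R n)) -> bdual B !=set0 ->
  bdual A `<=` msum (bdual B) (sscale eta (@unitB R n)).
Proof.
move=> l0 eta0 le_eta BA [z Bz] y Ay.
have yB x : B x -> enorm (y - x) <= 1 + l.
  move=> /BA[a Aa [c lc <-]]; rewrite opprD addrA.
  apply: le_trans (enormD _ _) _; rewrite enormN.
  by apply: lerD; [exact: Ay | exact: sscale_unitB_enorm].
have [p Bp yp] := exists_bdual_near l0 yB Bz.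
exists p => //; exists (y - p); last exact: subrKC.
apply: enorm_sscale_unitB => //; apply/enorm_leP; first exact: ltW.
exact: le_trans yp le_eta.
Qed.

Lemma hausdorff_lt_inflate (K L : set V) d : (hausdorff K L < d%:E)%E ->
  exists l, [/\ 0 <= l, l < d, K `<=` msum L (sscale l (@unitB R n))
                & L `<=` msum K (sscale l (@unitB R n))].
Proof. by case/ereal_inf_lt => _ [l [l0 [KL LK]] <-]; rewrite lte_fin; exists l. Qed.

Lemma hausdorff_le_inflate (K L : set V) l : 0 <= l ->
  K `<=` msum L (sscale l (@unitB R n)) -> L `<=` msum K (sscale l (@unitB R n)) ->
  (hausdorff K L <= l%:E)%E.
Proof. by move=> l0 KL LK; apply: ereal_inf_lbound; exists l. Qed.

End DualBalls.

Theorem corollary2p10 (R : realType) (n : nat) :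
  forall K : set 'rV[R]_n, admissible K ->
  forall eps : R, 0 < eps ->
  exists2 delta : R, 0 < delta &
  forall L : set 'rV[R]_n, admissible L ->
    (hausdorff K L < delta%:E)%E ->
    (hausdorff (bdual K) (bdual L) < eps%:E)%E.
Proof.
move=> K AK eps eps0; pose eta := eps / 2.
have eta0 : 0 < eta by rewrite divr_gt0.
exists (Num.min 1 (eta ^+ 2 / 3)); first by rewrite lt_min ltr01 divr_gt0 ?exprn_gt0.
move=> L AL /hausdorff_lt_inflate[l [l0 + KL LK]].
rewrite lt_min => /andP[l1]; rewrite ltr_pdivlMr // => l_eta.
have le_eta : 2 * l + l ^+ 2 <= eta ^+ 2 by nra.
apply: le_lt_trans (hausdorff_le_inflate (ltW eta0) _ _) _.
- exact: bdual_sub_inflate l0 eta0 le_eta LK (admissible_bdual_neq0 AL).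
- exact: bdual_sub_inflate l0 eta0 le_eta KL (admissible_bdual_neq0 AK).
by rewrite lte_fin ltr_pdivrMr // ltr_pMr // ltr1n.
Qed.
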